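(* Let $f$ be a nonnegative integer-valued function on $V(G)$. Every graph $G$ that is $t$-iso-tough for $t(v)=f(v)(f(v)+1)$ has an $(f,f+1)$-factor.
   Context: Graphs are finite, have no loops, but may have multiple edges; degrees count multiplicities. For $S\subseteq V(G)$, $G\setminus S$ is the graph obtained by deleting $S$ and $I(G\setminus S)$ is its set of isolated vertices. For a real function $t$ on $V(G)$, $G$ is $t$-iso-tough if $\sum_{v\in I(G\setminus S)}t(v)\le |S|$ for all $S\subseteq V(G)$. An $(f,f+1)$-factor is a spanning subgraph $F$ with $f(v)\le d_F(v)\le f(v)+1$ for all $v$. *)

From mathcomp Require Import all_boot.
Set Implicit Arguments. Unset Strict Implicit. Unset Printing Implicit Defensive.

(* A finite loopless multigraph on vertex set T, given by its edge
   multiplicity function: m u v = number of edges between u and v. *)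
Record multigraph (T : finType) := Multigraph {
  mult : T -> T -> nat;
  mult_sym : forall u v, mult u v = mult v u;
  mult_loopless : forall v, mult v v = 0
}.

Definition deg (T : finType) (m : T -> T -> nat) (v : T) : nat :=
  \sum_(u : T) m v u.

Definition iso_after (T : finType) (G : multigraph T) (S : {set T}) : {set T} :=
  [set v | (v \notin S) && [forall u, (u \notin S) ==> (mult G v u == 0)]].

Definition iso_tough (T : finType) (G : multigraph T) (t : T -> nat) : Prop :=
  forall S : {set T}, \sum_(v in iso_after G S) t v <= #|S|.

Definition is_ff1_factor (T : finType) (G : multigraph T) (f : T -> nat)
    (F : T -> T -> nat) : Prop :=
  (forall u v, F u v = F v u) /\
  (forall u v, F u v <= mult G u v) /\
  (forall v, f v <= deg F v <= f v + 1).

From mathcomp Require Import all_boot all_algebra zify ring.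
Set Implicit Arguments. Unset Strict Implicit. Unset Printing Implicit Defensive.
Import GRing.Theory.

(* Start from the empty subgraph and keep d_F <= f + 1 while decreasing the
   deficiency sum_v (f v - d_F(v)). From a vertex v0 with d_F(v0) < f v0,
   follow alternating walks that add a non-full edge at a vertex of degree at
   most f and remove an F-edge at a vertex of degree f + 1. If such a walk can
   stop, i.e. an added edge ends at a vertex of degree at most f or a removed
   edge at a vertex of degree f + 1, flipping a shortest one gains one unit of
   deficiency at v0 and loses none elsewhere. Otherwise the reachable vertices
   split into a set A entered by removals and a set S entered by additions,
   with all edges from A to V - S full and all F-edges of S going to A;
   counting gives |S| + e(A, V - S) < sum_A f. Picking greedily in A vertices
   of largest f yields an independent set I that becomes isolated after
   deleting S and the neighbours of I, and this contradicts t-iso-toughness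
   for t = f (f + 1). *)

Lemma leq_sum_subset (I : finType) (A B : {set I}) (F : I -> nat) :
  A \subset B -> \sum_(i in A) F i <= \sum_(i in B) F i.
Proof.
by move=> AB; rewrite [X in _ <= X](big_setID A) /= (setIidPr AB) leq_addr.
Qed.

Section AlternatingSum.
Variables (T : finType) (p : nat -> T) (k : nat).

Definition walk_edge i (a b : T) : nat :=
  (p i == a) * (p i.+1 == b) + (p i == b) * (p i.+1 == a).

Definition alt_delta a b : int :=
  (\sum_(i < k) (-1) ^+ i * (walk_edge i a b)%:Z)%R.

Lemma walk_edgeC i a b : walk_edge i a b = walk_edge i b a.
Proof. by rewrite /walk_edge addnC. Qed.

Lemma alt_deltaC a b : alt_delta a b = alt_delta b a.
Proof. by apply: eq_bigr => i _; rewrite walk_edgeC. Qed.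

Lemma walk_edgeP i a b : 0 < walk_edge i a b ->
  (p i = a /\ p i.+1 = b) \/ (p i = b /\ p i.+1 = a).
Proof.
rewrite addn_gt0 !muln_gt0 !lt0b.
by case/orP=> /andP[/eqP-> /eqP->]; [left | right].
Qed.

Lemma sum_walk_edge i v : \sum_u walk_edge i v u = (p i == v) + (p i.+1 == v).
Proof.
have sum_eq1 (x : T) : \sum_u (x == u) = 1.
  by rewrite (bigD1 x) //= eqxx big1 // => u /negbTE; rewrite eq_sym => ->.
rewrite big_split /= -big_distrr -big_distrl /= !sum_eq1 muln1 mul1n.
by rewrite [p i == v]eq_sym.
Qed.

(* The signs alternate along the walk, so the contributions of interior
   vertices telescope away. *)
Lemma sum_alt_delta v :
  (\sum_u alt_delta v u = (p 0 == v)%:Z - (-1) ^+ k * (p k == v)%:Z)%R.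
Proof.
pose g i : int := (- (-1) ^+ i * (p i == v)%:Z)%R.
rewrite /alt_delta exchange_big /=.
transitivity (\sum_(0 <= i < k) (g i.+1 - g i))%R; last first.
  by rewrite telescope_sumr // /g expr0; ring.
rewrite big_mkord; apply: eq_bigr => i _.
rewrite -mulr_sumr -(big_morph Posz PoszD (erefl 0%R)) sum_walk_edge /g exprS.
rewrite PoszD; ring.
Qed.

Lemma alt_delta_edge i a b :
  i < k -> 0 < walk_edge i a b -> p i != p i.+1 ->
  (forall j, j < k -> j != i -> walk_edge j a b = 0) ->
  alt_delta a b = ((-1) ^+ i)%R.
Proof.
move=> ltik pos loopless others.
have edge1 : walk_edge i a b = 1.
  move/negbTE: loopless => ne.
  by case/walk_edgeP: pos => -[<- <-]; rewrite /walk_edge !eqxx ne.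
rewrite /alt_delta (bigD1 (Ordinal ltik)) //= edge1 mulr1 big1 ?addr0 //.
by move=> j neq; rewrite others ?mulr0 //; apply: contra neq => /eqP eq;
   apply/eqP/val_inj.
Qed.

Lemma walk_edge_uniq i j a b :
  (forall i j, i < j < k -> p i != p j) ->
  (forall i, i.+2 <= k -> p i != p i.+2) ->
  i < j < k -> 0 < walk_edge i a b -> walk_edge j a b = 0.
Proof.
move=> distinct no_backtrack /andP[ltij ltjk] /walk_edgeP edge_i.
apply/eqP; rewrite -leqn0 leqNgt; apply/negP => /walk_edgeP edge_j.
have [same|[cross1 cross2]] : p i = p j \/ (p i = p j.+1 /\ p i.+1 = p j).
  by case: edge_i edge_j => -[-> ->] [] [-> ->]; auto.
- by move: (distinct i j); rewrite ltij ltjk same eqxx => /(_ isT).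
- have [eq_ij|ne_ij] := eqVneq i.+1 j.
    by move: (no_backtrack i); rewrite eq_ij ltjk cross1 eqxx => /(_ isT).
  move: (distinct i.+1 j); rewrite ltn_neqAle ne_ij ltij ltjk cross2 eqxx.
  by move/(_ isT).
Qed.
End AlternatingSum.

Section Factors.
Variables (T : finType) (G : multigraph T) (f : T -> nat).
Local Notation m := (mult G).

Definition deg_out (S : {set T}) x := \sum_(u in ~: S) m x u.

Lemma card_neighbours_le_deg_out (S A : {set T}) x :
  {in A, forall y, y \notin S} ->
  #|[set y in A | 0 < m x y]| <= deg_out S x.
Proof.
move=> AS; rewrite -sum1_card /deg_out.
apply: (@leq_trans (\sum_(y in [set y in A | 0 < m x y]) m x y)).
  by apply: leq_sum => y; rewrite inE => /andP[_].
apply: leq_sum_subset; apply/subsetP => y.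
by rewrite !inE => /andP[/AS].
Qed.

Lemma greedy_independent_set (S A : {set T}) :
  {in A, forall x, x \notin S} ->
  exists I : {set T},
  [/\ I \subset A, {in I &, forall x y, m x y = 0} &
   \sum_(x in A) f x + \sum_(x in I) deg_out S x <=
   \sum_(x in I) f x * (f x + 1) + \sum_(x in A) deg_out S x].
Proof.
have [n] := ubnP #|A|; elim: n A => // n IH A ltAn AS.
have [->|[a aA]] := set_0Vmem A.
  by exists set0; rewrite sub0set !big_set0; split => // x y; rewrite inE.
have [x xA fx_max] : exists2 x, x \in A & forall y, y \in A -> f y <= f x.
  by case: (arg_maxnP f aA) => z; exists z.
have ltA'n : #|A :\ x| < n by move: ltAn; rewrite (cardsD1 x A) xA.
(* A vertex with few outside edges is discarded, otherwise it joins I and its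
   neighbours in A are discarded: they cost at most f x each, and there are
   fewer than f x of them. *)
have [le_fx_out|lt_out_fx] := leqP (f x) (deg_out S x).
  have [|I [IA Iind Ibound]] := IH (A :\ x) ltA'n.
    by move=> y; rewrite inE => /andP[_ /AS].
  exists I; split => //; first exact: subset_trans IA (subsetDl A [set x]).
  by rewrite (big_setD1 x xA) /= (big_setD1 x xA) /=; lia.
set N := [set y in A :\ x | 0 < m x y].
have [||I [IA Iind Ibound]] := IH ((A :\ x) :\: N).
- exact: leq_ltn_trans (subset_leq_card (subsetDl _ _)) _.
- by move=> y; rewrite !inE => /andP[_ /andP[_ /AS]].
have xI : x \notin I by apply/negP => /(subsetP IA); rewrite !inE eqxx.
have mxI : {in I, forall y, m x y = 0}.
  move=> y /(subsetP IA) /setDP[yA' yN]; apply/eqP; rewrite -leqn0 leqNgt.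
  by apply: contra yN => pos; rewrite inE yA'.
exists (x |: I); split.
- rewrite subUset sub1set xA /=.
  exact: subset_trans IA (subset_trans (subsetDl _ _) (subsetDl _ _)).
- move=> y z; rewrite !inE => /predU1P[->|yI] /predU1P[->|zI].
  + exact: mult_loopless.
  + exact: mxI.
  + by rewrite mult_sym mxI.
  + exact: Iind.
- have sum_fN : \sum_(y in N) f y <= #|N| * f x.
    rewrite -sum1_card big_distrl /=; apply: leq_sum => y.
    by rewrite !inE mul1n => /andP[/andP[_ /fx_max]].
  have cardN : #|N| <= deg_out S x.
    by apply: card_neighbours_le_deg_out => y; rewrite inE => /andP[_ /AS].
  rewrite !big_setU1 //= (big_setD1 x xA) /= (big_setD1 x xA) /=.
  rewrite (big_setID N) /= [X in _ <= _ + (_ + X)](big_setID N) /=.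
  have NA : N \subset A :\ x by apply/subsetP => y; rewrite inE => /andP[].
  rewrite (setIidPr NA).
  move: Ibound sum_fN cardN lt_out_fx.
  set fN := \sum_(y in N) f y; set fR := \sum_(y in _ :\: N) f y.
  set dN := \sum_(y in N) deg_out S y.
  set dR := \sum_(y in _ :\: N) deg_out S y.
  set dI := \sum_(y in I) deg_out S y; set tI := \sum_(y in I) _.
  move=> *; nia.
Qed.

(* The independent set I is isolated once S and its neighbours outside S are
   deleted, and there are at most [\sum_(x in I) deg_out S x] such
   neighbours. *)
Lemma iso_tough_sum_le (S A : {set T}) :
  iso_tough G (fun v => f v * (f v + 1)) -> {in A, forall x, x \notin S} ->
  \sum_(x in A) f x <= #|S| + \sum_(x in A) deg_out S x.
Proof.
move=> tough AS; have [I [IA Iind Ibound]] := greedy_independent_set AS.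
set NI := [set u | (u \notin S) && [exists x in I, 0 < m x u]].
have Iiso : I \subset iso_after G (S :|: NI).
  apply/subsetP => x xI; have xS := AS x (subsetP IA x xI).
  rewrite inE !inE negb_or xS /=; apply/andP; split.
    by apply/existsP => -[y /andP[yI]]; rewrite Iind.
  apply/forallP => u; apply/implyP; rewrite !inE negb_or => /andP[uS].
  apply: contraR; rewrite -lt0n => pos; rewrite uS.
  by apply/existsP; exists x; rewrite xI.
have cardNI : #|NI| <= \sum_(x in I) deg_out S x.
  rewrite -sum1_card /deg_out exchange_big /=.
  apply: (@leq_trans (\sum_(u in NI) \sum_(x in I) m x u)).
    apply: leq_sum => u; rewrite inE => /andP[_ /existsP[x /andP[xI pos]]].
    by rewrite (bigD1 x xI) //= (leq_trans pos) ?leq_addr.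
  by apply: leq_sum_subset; apply/subsetP => u; rewrite !inE => /andP[].
have := leq_trans (leq_sum_subset (fun x => f x * (f x + 1)) Iiso) (tough _).
rewrite cardsU; lia.
Qed.

Definition partial_factor (F : T -> T -> nat) :=
  [/\ forall a b, F a b = F b a, forall a b, F a b <= m a b &
      forall v, deg F v <= f v + 1].

Definition deficiency (F : T -> T -> nat) := \sum_v (f v - deg F v).

(* Alternating walks are paths in a graph on T * bool: at (x, false) the walk
   leaves x along a non-full edge, to be added, provided d_F(x) <= f x; at
   (x, true) it leaves x along an F-edge, to be removed, provided
   d_F(x) = f x + 1. *)
Definition alt_step (F : T -> T -> nat) (s t : T * bool) : bool :=
  if s.2 then ~~ t.2 && (deg F s.1 == (f s.1).+1) && (0 < F s.1 t.1)
  else t.2 && (deg F s.1 <= f s.1) && (F s.1 t.1 < m s.1 t.1).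

Definition alt_end (F : T -> T -> nat) (s : T * bool) : bool :=
  if s.2 then deg F s.1 <= f s.1 else deg F s.1 == (f s.1).+1.

Section AlternatingClosure.
Variables (F : T -> T -> nat) (v0 : T).
Hypotheses (F_partial : partial_factor F) (v0_deficient : deg F v0 < f v0).
Hypothesis no_alt_end :
  forall s, connect (alt_step F) (v0, false) s -> ~~ alt_end F s.

Let Out := [set x | connect (alt_step F) (v0, false) (x, false)].
Let In := [set x | connect (alt_step F) (v0, false) (x, true)].

Let deg_Out x : x \in Out -> deg F x <= f x.
Proof.
case: F_partial => _ _ /(_ x) Fx.
by rewrite inE => /no_alt_end; rewrite /alt_end /= => /eqP; lia.
Qed.

Let deg_In x : x \in In -> deg F x = f x + 1.
Proof.
case: F_partial => _ _ /(_ x) Fx.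
by rewrite inE => /no_alt_end; rewrite /alt_end /= -ltnNge; lia.
Qed.

Let Out_In_disjoint : {in Out, forall x, x \notin In}.
Proof. by move=> x /deg_Out Fx; apply/negP => /deg_In; lia. Qed.

Let Out_full x u : x \in Out -> u \notin In -> F x u = m x u.
Proof.
case: F_partial => _ Fm _ xO; apply: contraNeq => neq.
have lt : F x u < m x u by rewrite ltn_neqAle neq Fm.
move: (xO); rewrite !inE => /connect_trans; apply; apply: connect1.
by rewrite /alt_step /= lt deg_Out.
Qed.

Let In_empty y u : y \in In -> u \notin Out -> F y u = 0.
Proof.
move=> yI; apply: contraNeq; rewrite -lt0n => pos.
move: (yI); rewrite !inE => /connect_trans; apply; apply: connect1.
by rewrite /alt_step /= pos deg_In // addn1 eqxx.
Qed.

(* Counting F-edges between In and Out: each In vertex has degree >= 1, all of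
   them go to Out, while Out has total degree below its total demand. *)
Lemma alt_closure_violates_bound :
  #|In| + \sum_(x in Out) deg_out In x < \sum_(x in Out) f x.
Proof.
have sum_In : \sum_(y in In) deg F y = \sum_(y in In) \sum_(u in Out) F y u.
  apply: eq_bigr => y yI; rewrite /deg (bigID (mem Out)) /=.
  by rewrite [X in _ + X]big1 ?addn0 // => u; apply: In_empty.
have sum_Out : \sum_(x in Out) deg F x =
    \sum_(x in Out) \sum_(u in In) F x u + \sum_(x in Out) deg_out In x.
  rewrite -big_split /=; apply: eq_bigr => x xO.
  rewrite /deg (bigID (mem In)) /=; congr (_ + _).
  by apply: eq_big => [u|u]; [rewrite !inE | apply: Out_full].
have In_Out_edges : \sum_(y in In) \sum_(u in Out) F y u =
    \sum_(x in Out) \sum_(u in In) F x u.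
  by rewrite exchange_big; apply: eq_bigr => x _; apply: eq_bigr => y _;
     case: F_partial.
have card_In : #|In| <= \sum_(y in In) deg F y.
  by rewrite -sum1_card; apply: leq_sum => y /deg_In ->; rewrite addn1.
have lt_Out : \sum_(x in Out) deg F x < \sum_(x in Out) f x.
  have v0O : v0 \in Out by rewrite inE connect0.
  rewrite (bigD1 v0 v0O) [X in _ < X](bigD1 v0 v0O) /= -addSn.
  by apply: leq_add => //; apply: leq_sum => x /andP[/deg_Out].
lia.
Qed.

Lemma alt_closure_not_tough : ~ iso_tough G (fun v => f v * (f v + 1)).
Proof.
move=> /iso_tough_sum_le /(_ Out_In_disjoint).
by rewrite leqNgt alt_closure_violates_bound.
Qed.
End AlternatingClosure.

Lemma exists_alt_end F v0 :
  iso_tough G (fun v => f v * (f v + 1)) -> partial_factor F ->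
  deg F v0 < f v0 ->
  exists2 s, connect (alt_step F) (v0, false) s & alt_end F s.
Proof.
move=> tough F_partial v0_deficient.
have [/existsP[s /andP[reach s_end]]|none] :=
  boolP [exists s, connect (alt_step F) (v0, false) s && alt_end F s].
  by exists s.
case: (alt_closure_not_tough F_partial v0_deficient _ tough) => s reach.
by apply: contra none => end_s; apply/existsP; exists s; rewrite reach.
Qed.

Section Flip.
Variables (F : T -> T -> nat) (p : nat -> T) (k : nat).
Hypothesis F_partial : partial_factor F.
Hypothesis start_deficient : deg F (p 0) < f (p 0).
Hypothesis walk_step : forall i, i < k ->
  if odd i then deg F (p i) = f (p i) + 1 /\ 0 < F (p i) (p i.+1)
  else deg F (p i) <= f (p i) /\ F (p i) (p i.+1) < m (p i) (p i.+1).
Hypothesis walk_end :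
  if odd k then deg F (p k) <= f (p k) else deg F (p k) == f (p k) + 1.
Hypothesis walk_parity_uniq :
  forall i j, i < j <= k -> odd i = odd j -> p i != p j.

Let walk_loopless i : i < k -> p i != p i.+1.
Proof.
move=> /walk_step step; apply/eqP => loop; move: step; rewrite -loop.
case: F_partial => _ /(_ (p i) (p i)); rewrite mult_loopless => F0 _.
by case: (odd i) => -[_]; lia.
Qed.

(* Vertices at positions of different parity below k have degrees f + 1 and
   at most f respectively. *)
Let walk_distinct i j : i < j < k -> p i != p j.
Proof.
move=> /andP[ltij ltjk]; have [same|] := eqVneq (odd i) (odd j).
  by apply: walk_parity_uniq => //; rewrite ltij ltnW.
have := walk_step (ltn_trans ltij ltjk); have := walk_step ltjk.
by case: (odd i); case: (odd j) => //= -[dj _] [di _] _;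
   apply/eqP => e; rewrite e in di; lia.
Qed.

Let no_backtrack i : i.+2 <= k -> p i != p i.+2.
Proof.
by move=> le2k; apply: walk_parity_uniq; rewrite ?le2k ?andbT // !oddS negbK.
Qed.

Let alt_delta_bounds a b :
  (0 <= (F a b)%:Z + alt_delta p k a b <= (m a b)%:Z)%R.
Proof.
case: F_partial => F_sym F_le_m _.
have [i pos|none] := pickP (fun i : 'I_k => 0 < walk_edge p i a b); last first.
  have -> : alt_delta p k a b = 0%R.
    apply: big1 => i _; move/negbT: (none i).
    by rewrite lt0n negbK => /eqP ->; rewrite mulr0.
  by rewrite addr0; have := F_le_m a b; lia.
have others j : j < k -> j != i -> walk_edge p j a b = 0.
  move=> ltjk; rewrite neq_ltn => /orP[ltji|ltij].
    apply/eqP; rewrite -leqn0 leqNgt; apply: contraL pos => posj.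
    by rewrite (walk_edge_uniq walk_distinct no_backtrack _ posj) // ltji /=.
  by apply: (walk_edge_uniq walk_distinct no_backtrack _ pos); rewrite ltij.
rewrite (alt_delta_edge (ltn_ord i) pos (walk_loopless (ltn_ord i)) others).
have [-> ->] : F a b = F (p i) (p i.+1) /\ m a b = m (p i) (p i.+1).
  by case/walk_edgeP: pos => -[-> ->]; rewrite F_sym mult_sym.
have := walk_step (ltn_ord i); have := F_le_m (p i) (p i.+1).
by rewrite -signr_odd; case: (odd i) => /= + [_]; rewrite ?expr1 ?expr0; lia.
Qed.

(* Edges at even positions of the walk are added, those at odd positions are
   removed; [alt_delta_bounds] shows that the result stays between 0 and m. *)
Definition alt_flip a b := absz ((F a b)%:Z + alt_delta p k a b)%R.

Let alt_flipE a b : ((alt_flip a b)%:Z = (F a b)%:Z + alt_delta p k a b)%R.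
Proof. by rewrite gez0_abs //; case/andP: (alt_delta_bounds a b). Qed.

Lemma deg_alt_flip v : ((deg alt_flip v)%:Z =
  (deg F v)%:Z + (p 0 == v)%:Z - (-1) ^+ k * (p k == v)%:Z)%R.
Proof.
rewrite /deg !(big_morph Posz PoszD (erefl 0%R)).
rewrite (eq_bigr _ (fun u _ => alt_flipE v u)) big_split /=.
by rewrite sum_alt_delta addrA.
Qed.

(* [p 0] gains an edge; [p k] gains one if k is odd and loses one otherwise. *)
Let deg_alt_flip_bounds v : [/\ deg alt_flip v <= f v + 1,
  f v - deg alt_flip v <= f v - deg F v & p 0 = v -> deg F v < deg alt_flip v].
Proof.
have := deg_alt_flip v; case: F_partial => _ _ /(_ v) Fv.
have start : p 0 = v -> deg F v < f v by move=> <-.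
have stop : p k = v -> if odd k then deg F v <= f v else deg F v == f v + 1.
  by move=> <-.
rewrite -signr_odd; case: (odd k) stop => stop; rewrite ?expr1 ?expr0;
  case: (p 0 =P v) start => [e0 /(_ e0)|ne0 _];
  case: (p k =P v) stop => [ek /(_ ek)|nek _] /=;
  split; first [by move=> /ne0 | lia].
Qed.

Lemma alt_flip_partial : partial_factor alt_flip.
Proof.
case: F_partial => F_sym _ _; split => [a b|a b|v].
- by rewrite /alt_flip F_sym alt_deltaC.
- by have := alt_delta_bounds a b; rewrite -alt_flipE; lia.
- by case: (deg_alt_flip_bounds v).
Qed.

Lemma alt_flip_deficiency : deficiency alt_flip < deficiency F.
Proof.
rewrite /deficiency (bigD1 (p 0)) //= [X in _ < X](bigD1 (p 0)) //= -addSn.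
apply: leq_add; last by apply: leq_sum => v _; case: (deg_alt_flip_bounds v).
by case: (deg_alt_flip_bounds (p 0)) => _ _ /(_ erefl); lia.
Qed.
End Flip.

Lemma alt_step_parity F (s t : T * bool) : alt_step F s t -> t.2 = ~~ s.2.
Proof. by case: s t => x [] [y []] //= /andP[/andP[]]. Qed.

Lemma alt_walk_improves F v0 s :
  partial_factor F -> deg F v0 < f v0 ->
  connect (alt_step F) (v0, false) s -> alt_end F s ->
  exists F', partial_factor F' /\ deficiency F' < deficiency F.
Proof.
move=> F_partial v0_deficient /connectP[w walk ->].
case: (shortenP walk) => {walk}w walk w_uniq _ w_end.
set s0 := (v0, false) in walk w_uniq w_end.
pose st i := nth s0 (s0 :: w) i; pose p i := (st i).1; pose k := size w.
have step i : i < k -> alt_step F (st i) (st i.+1).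
  by move=> lt_ik; apply: (pathP s0 walk).
have parity i : i <= k -> (st i).2 = odd i.
  elim: i => [|i IH] lt_ik //.
  by rewrite (alt_step_parity (step i lt_ik)) IH // ltnW.
have stE i : i <= k -> st i = (p i, odd i).
  by move=> le_ik; rewrite -(parity i le_ik) [st i]surjective_pairing.
have walk_step i : i < k ->
    if odd i then deg F (p i) = f (p i) + 1 /\ 0 < F (p i) (p i.+1)
    else deg F (p i) <= f (p i) /\ F (p i) (p i.+1) < m (p i) (p i.+1).
  move=> lt_ik; have := step i lt_ik.
  rewrite /alt_step (stE i (ltnW lt_ik)) (stE i.+1 lt_ik) /=.
  by case: (odd i) => /= /andP[dF F_ok]; split => //; rewrite addn1; apply/eqP.
have walk_end :
    if odd k then deg F (p k) <= f (p k) else deg F (p k) == f (p k) + 1.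
  by move: w_end; rewrite (last_nth s0) -/(st k) stE //= /alt_end /= addn1.
have walk_parity_uniq i j : i < j <= k -> odd i = odd j -> p i != p j.
  move=> /andP[lt_ij le_jk] odd_ij; apply/negP => /eqP eq_p.
  have lt_jw : j < size (s0 :: w) by [].
  have := nth_uniq s0 (ltn_trans lt_ij lt_jw) lt_jw w_uniq.
  rewrite -/(st i) -/(st j) !stE ?(ltnW (leq_trans lt_ij le_jk)) //.
  by rewrite eq_p odd_ij eqxx (ltn_eqF lt_ij).
by exists (alt_flip F p k); split;
  [apply: alt_flip_partial | apply: alt_flip_deficiency].
Qed.

Lemma partial_factor_improves F :
  iso_tough G (fun v => f v * (f v + 1)) -> partial_factor F ->
  (forall v, f v <= deg F v) \/
  exists F', partial_factor F' /\ deficiency F' < deficiency F.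
Proof.
move=> tough F_partial.
have [/forallP full|/forallPn[v0]] := boolP [forall v, f v <= deg F v].
  by left.
rewrite -ltnNge => v0_deficient; right.
have [s reach s_end] := exists_alt_end tough F_partial v0_deficient.
exact: alt_walk_improves F_partial v0_deficient reach s_end.
Qed.
End Factors.

Theorem mainTheorem12 (T : finType) (G : multigraph T) (f : T -> nat) :
  iso_tough G (fun v => f v * (f v + 1)) ->
  exists F : T -> T -> nat, is_ff1_factor G f F.
Proof.
move=> tough.
suff [F [[F_sym F_le_m F_deg] F_full]] :
    exists F, partial_factor G f F /\ forall v, f v <= deg F v.
  by exists F; split; [|split] => // v; rewrite F_full F_deg.
have F0_partial : partial_factor G f (fun _ _ => 0).
  by split => // v; rewrite /deg big1.
have [n] := ubnP (deficiency f (fun _ _ : T => 0)).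
elim: n (fun _ _ : T => 0) F0_partial => // n IH F F_partial lt_def.
have [F_full|[F' [F'_partial lt_F'F]]] :=
  partial_factor_improves tough F_partial.
  by exists F.
exact: IH F' F'_partial (leq_trans lt_F'F lt_def).
Qed.
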